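(* Let $m\in\mathbb{Z}_{>0}$, let $X$ be a finite set with $|X|=2m$, $S=\{0,1\}^X$ and $B=\{-1,1\}^X$. Then for every $\varepsilon,\delta\ge0$, $\#\mathsf{CorM}(S,B,\varepsilon,\delta)=0$. However, for the uniform distribution $\mu_X$ over $X$ and every $\varepsilon,\delta\in(0,1/2)$, $\#\mathsf{DCorM}^{\mu_X}(B,S,\varepsilon,\delta)\ge(1/2-\varepsilon)m$.
   Context: Generalized product: $u_1\diamondsuit u_2=u_1u_2$ if $u_2\in[-1,1]$, $-|u_1|$ if $u_2=*$ (here all hypotheses are total). Learners take $n$ points of $X\times[-1,1]$ and output $f:X\to\{-1,1\}$ (possibly randomized). $\mathsf{CorM}_n(S,B,\varepsilon,\delta)$: for every distribution $\mu$ on $X\times[-1,1]$ for which some $s\in S$ has $\Pr_{x\sim\mu|_X}[s(x)\ne*]=1$ and $\mathbb{E}_\mu[y|x]=s(x)$, with probability $\ge1-\delta$ over $n$ i.i.d. samples, $\mathbb{E}_\mu[yf(x)]\ge\sup_{b\in B}\mathbb{E}_\mu[y\diamondsuit b(x)]-\varepsilon$. $\mathsf{DCorM}^{\mu_X}_n(S,B,\varepsilon,\delta)$: the same guarantee but only required for distributions $\mu$ with $\mu|_X=\mu_X$ and $\Pr_\mu[s(x)=y]=1$ for some $s\in S$. $\#\mathsf{CorM}$, $\#\mathsf{DCorM}^{\mu_X}$ are the least $n$ for which such a learner exists. *)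

From HB Require Import structures.
From mathcomp Require Import all_boot all_order all_algebra.
From mathcomp Require Import all_classical all_reals all_analysis.
Set Implicit Arguments. Unset Strict Implicit. Unset Printing Implicit Defensive.
Import Order.TTheory GRing.Theory Num.Theory.
Local Open Scope classical_set_scope.
Local Open Scope ring_scope.

Section Learning.
Variables (R : realType) (X : finType).

(* A distribution mu on X x [-1,1], X finite, written as its marginal on X
   (px) together with the conditional law of y given x (py x), i.e.
   mu = sum_x px x * (dirac x (x) py x). *)
Record dist := Dist { px : X -> R ; py : X -> probability R R }.

Definition is_dist (mu : dist) : Prop :=
  (forall x, 0 <= px mu x) /\ (\sum_(x : X) px mu x = 1) /\
  (forall x, py mu x [set y : R | -1 <= y <= 1] = 1%E).

(* Hypotheses X -> [-1,1] u {*}; None stands for *. *)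
Definition hyp := X -> option R.

Definition gprod (u1 : R) (u2 : option R) : R :=
  match u2 with Some u => u1 * u | None => - `|u1| end.

Definition expect (mu : dist) (g : X -> R -> R) : \bar R :=
  \sum_(x : X) (px mu x)%:E * \int[py mu x]_y (g x y)%:E.

Definition gcorr (mu : dist) (b : hyp) : \bar R := expect mu (fun x y => gprod y (b x)).

(* A randomized hypothesis f : X -> {-1,1} is represented by its mean
   h x = E[f x] in [-1,1]; E_mu[y f(x)] = E_mu[y h(x)]. *)
Definition corr (mu : dist) (h : X -> R) : \bar R := expect mu (fun x y => y * h x).

Fixpoint sampleE (mu : dist) (n : nat) (F : seq (X * R) -> \bar R) : \bar R :=
  match n with
  | 0 => F [::]
  | k.+1 => \sum_(x : X) (px mu x)%:E *
             \int[py mu x]_y sampleE mu k (fun s => F ((x, y) :: s))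
  end.

Definition learner := seq (X * R) -> X -> R.
Definition valid_learner (L : learner) : Prop :=
  forall s x, -1 <= L s x <= 1.

Definition success_prob (mu : dist) (n : nat) (L : learner) (B : set hyp)
  (eps : R) : \bar R :=
  sampleE mu n (fun s =>
    (((ereal_sup [set gcorr mu b | b in B] - eps%:E <= corr mu (L s))%E
       : bool)%:R : R)%:E).

Definition realizes (mu : dist) (s : hyp) : Prop :=
  (\sum_(x : X | s x == None) px mu x = 0) /\
  (forall x, 0 < px mu x -> forall v, s x = Some v ->
     (\int[py mu x]_y y%:E = v%:E)%E).

Definition CorM (n : nat) (S B : set hyp) (eps delta : R) : Prop :=
  exists L : learner, valid_learner L /\
    forall mu, is_dist mu -> (exists2 s, S s & realizes mu s) ->
      ((1 - delta)%:E <= success_prob mu n L B eps)%E.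

Definition agree_prob (mu : dist) (s : hyp) : \bar R :=
  \sum_(x : X) (px mu x)%:E * py mu x [set y | s x = Some y].

Definition DCorM (muX : X -> R) (n : nat) (S B : set hyp) (eps delta : R)
  : Prop :=
  exists L : learner, valid_learner L /\
    forall mu, is_dist mu -> (forall x, px mu x = muX x) ->
      (exists2 s, S s & agree_prob mu s = 1%E) ->
      ((1 - delta)%:E <= success_prob mu n L B eps)%E.

Definition least_samples (P : nat -> Prop) (n : nat) : Prop :=
  P n /\ forall k, P k -> (n <= k)%N.

Definition cube01 : set hyp := [set h | forall x, h x = Some 0 \/ h x = Some 1].
Definition cubepm : set hyp := [set h | forall x, h x = Some (-1) \/ h x = Some 1].
Definition unif : X -> R := fun _ => (#|X|%:R)^-1.

End Learning.

From HB Require Import structures.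
From mathcomp Require Import all_boot all_order all_algebra.
From mathcomp Require Import all_classical all_reals all_analysis.
From mathcomp Require Import measurable_realfun ring lra.
Import Order.TTheory GRing.Theory Num.Theory HBNNSimple.
Set Implicit Arguments. Unset Strict Implicit. Unset Printing Implicit Defensive.
Local Open Scope ring_scope.

(* Without samples: when E[y|x] is 0 or 1, b(x) E[y|x] <= E[y|x] for b(x) = -1 or 1,
   so the constant hypothesis 1 already beats every +-1 benchmark.
   With samples: label X deterministically by +-1 according to s : X -> bool, so
   that the indicator of s is the best 0/1 benchmark. A sample u of size
   n < (1/2 - eps) m cannot tell s apart from the labelling that agrees with s on
   u and is flipped off u, and no single output is eps-good for both, since off u
   the two regrets at a point add up to 1. Hence for every sample at most half of
   the labellings are learnt, and averaging over s bounds the success probability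
   of some labelling by 1/2 < 1 - delta. *)

Lemma sum_unif (R : numFieldType) (X : finType) :
  (0 < #|X|)%N -> \sum_(x : X) (#|X|%:R^-1 : R) = 1.
Proof.
move=> X_gt0; rewrite sumr_const (_ : #|xpredT| = #|X|) //.
by rewrite -[_ *+ #|X|]mulr_natr mulVf // pnatr_eq0 -lt0n.
Qed.

Lemma card_involutive_disjoint (T : finType) (f : T -> T) (P : pred T) :
  involutive f -> (forall x, P x -> ~~ P (f x)) -> (#|P| * 2 <= #|T|)%N.
Proof.
move=> fK Pf; rewrite muln2 -addnn -{2}(fintype.card_image (inv_inj fK) P) -cardUI.
have -> : #|[predI P & [seq f x | x in P]]| = 0%N.
  apply: eq_card0 => y; rewrite !inE; apply/negbTE/andP => -[Py /mapP[x]].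
  by rewrite mem_enum => Px yfx; move: (Pf x Px); rewrite -yfx => /negP; apply.
by rewrite addn0 max_card.
Qed.

Lemma average_le_half (R : realFieldType) (T : finType) (I : eqType) (r : seq I)
    (p : I -> R) (Q : T -> I -> bool) (a : R) :
  (0 < #|T|)%N -> (forall i, 0 <= p i) -> \sum_(i <- r) p i = 1 ->
  (forall i, i \in r -> (#|Q^~ i| * 2 <= #|T|)%N) ->
  (forall x, a <= \sum_(i <- r) p i * (Q x i)%:R) -> a <= 1 / 2.
Proof.
move=> T_gt0 p_ge0 sum_p Q_half a_le.
have count_Q i : \sum_(x : T) (Q x i)%:R = #|Q^~ i|%:R :> R.
  by rewrite -natr_sum -sum1_card [in RHS]big_mkcond; congr _%:R.
have : #|T|%:R * a <= #|T|%:R / 2 :> R.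
  have sum_a : #|T|%:R * a <= \sum_(x : T) \sum_(i <- r) p i * (Q x i)%:R.
    by rewrite mulrC mulr_natr -sumr_const; apply: ler_sum => x _.
  have sum_half : \sum_(i <- r) p i * (#|T|%:R / 2) = #|T|%:R / 2.
    by rewrite -mulr_suml sum_p mul1r.
  apply: le_trans sum_a _; rewrite exchange_big /= -sum_half !big_seq.
  apply: ler_sum => i i_r; rewrite -mulr_sumr count_Q ler_wpM2l //.
  by rewrite ler_pdivlMr // -natrM ler_nat Q_half.
have : (0 : R) < #|T|%:R by rewrite ltr0n.
move: (#|T|%:R : R) => K; nra.
Qed.

Lemma integral_EFinN (d : measure_display) (T : measurableType d) (R : realType)
    (mu : measure T R) (f : T -> R) (v : R) :
  (\int[mu]_x (f x)%:E = v%:E -> \int[mu]_x (- f x)%:E = - v%:E)%E.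
Proof.
move=> fv; under eq_integral do rewrite EFinN.
have adde_def_of_fin (a b : \bar R) : (a - b)%E \is a fin_num -> (a +? - b)%E.
  by case: a => [a||]; case: b => [b||].
by rewrite integralN ?fv //; apply: adde_def_of_fin; rewrite -integralE fv.
Qed.

(* [f] need not be measurable, so [integral_dirac] does not apply. *)
Lemma integral_dirac_le (R : realType) (a : R) (f : R -> \bar R) :
  (forall y, 0 <= f y)%E -> (\int[\d_a]_y f y <= f a)%E.
Proof.
move=> f_ge0; rewrite ge0_integralE//; apply: ge_ereal_sup => _ [h hf <-].
have := hf a; rewrite patch_setT => ha.
rewrite -[X in sintegral _ X](patch_setT (fun=> 0)) -integral_nnsfun//.
rewrite integral_dirac//; last by apply/measurable_EFinP; exact: measurable_funPT.
by rewrite diracT mul1e.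
Qed.

Section ConstantLearner.
Variables (R : realType) (X : finType).

Lemma gcorr_le_corr1 (mu : dist R X) (s b : hyp R X) :
  is_dist mu -> cube01 s -> realizes mu s -> cubepm b ->
  (gcorr mu b <= corr mu (fun=> 1%R))%E.
Proof.
move=> [px_ge0 _] s01 [_ Es] bpm; apply: lee_sum => x _.
have [->|px_neq0] := eqVneq (px mu x) 0; first by rewrite !mul0e.
have px_gt0 : 0 < px mu x by rewrite lt0r px_neq0 px_ge0.
apply: lee_wpmul2l; first by rewrite lee_fin.
have [v sxv v01] : exists2 v, s x = Some v & (v = 0 \/ v = 1).
  by case: (s01 x) => ->; [exists 0 | exists 1]; auto.
have Ey := Es x px_gt0 v sxv.
under [X in (_ <= X)%E]eq_integral do rewrite mulr1.
case: (bpm x) => -> /=; under eq_integral do rewrite ?mulr1 ?mulrN1; last by [].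
by rewrite (integral_EFinN Ey) Ey lee_fin; case: v01 => ->; lra.
Qed.

Lemma CorM0_cube01_cubepm (eps delta : R) : 0 <= eps -> 0 <= delta ->
  CorM 0 (@cube01 R X) (@cubepm R X) eps delta.
Proof.
move=> eps_ge0 delta_ge0; exists (fun _ _ => 1); split=> [_ _|mu mu_dist [s s01 Hs]].
  by apply/andP; split; lra.
rewrite /success_prob /=.
have -> : (ereal_sup [set gcorr mu b | b in @cubepm R X] - eps%:E
              <= corr mu (fun=> 1%R))%E.
  apply: le_trans (geeDl _ _) _; first by rewrite lee_fin oppr_le0.
  by apply: ge_ereal_sup => _ [b bpm <-]; exact: gcorr_le_corr1 mu_dist s01 Hs bpm.
by rewrite lee_fin gerBl.
Qed.

End ConstantLearner.

Section LabelledUniform.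
Variables (R : realType) (X : finType).
Hypothesis X_gt0 : (0 < #|X|)%N.
Local Notation w := (#|X|%:R^-1 : R).

Definition label_dist (lab : X -> R) : dist R X :=
  Dist (@unif R X) (fun x => \d_(lab x) : probability R R).

Lemma label_dist_is_dist (lab : X -> R) :
  (forall x, -1 <= lab x <= 1) -> is_dist (label_dist lab).
Proof.
move=> lab1; split=> [x|]; first by rewrite /= /unif invr_ge0.
split=> [|x]; first exact: sum_unif.
by rewrite /= diracE mem_set //; exact: lab1.
Qed.

Lemma agree_prob_label_dist (lab : X -> R) :
  agree_prob (label_dist lab) (fun x => Some (lab x)) = 1%E.
Proof.
rewrite /agree_prob (eq_bigr (fun=> w%:E)) ?sumEFin ?sum_unif // => x _.
by rewrite /= diracE mem_set // mule1.
Qed.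

Lemma expect_label_dist (lab : X -> R) (g : X -> R -> R) :
  (forall x, measurable_fun setT (g x)) ->
  expect (label_dist lab) g = (\sum_x w * g x (lab x))%:E.
Proof.
move=> g_meas; rewrite /expect -sumEFin; apply: eq_bigr => x _ /=.
rewrite integral_dirac //; last exact/measurable_EFinP.
by rewrite diracT mul1e EFinM.
Qed.

Lemma corr_label_dist (lab h : X -> R) :
  corr (label_dist lab) h = (\sum_x w * (lab x * h x))%:E.
Proof. by apply: expect_label_dist => x; exact: mulrr_measurable. Qed.

Lemma gcorr_label_dist (lab c : X -> R) :
  gcorr (label_dist lab) (fun x => Some (c x)) = (\sum_x w * (lab x * c x))%:E.
Proof. by apply: expect_label_dist => x; exact: mulrr_measurable. Qed.

Fixpoint seqs_of_size (k : nat) : seq (seq X) :=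
  if k is k'.+1 then [seq x :: t | x <- index_enum X, t <- seqs_of_size k']
  else [:: [::]].

Lemma size_seqs_of_size k t : t \in seqs_of_size k -> size t = k.
Proof.
elim: k t => [|k IHk] t /=; first by rewrite inE => /eqP->.
by case/allpairsPdep => x [u [_ u_in ->]] /=; rewrite (IHk _ u_in).
Qed.

Lemma sum_seqs_of_size_unif k : \sum_(t <- seqs_of_size k) w ^+ k = 1.
Proof.
elim: k => [|k IHk] /=; first by rewrite big_seq1.
rewrite big_allpairs_dep -[RHS](sum_unif R X_gt0); apply: eq_bigr => x _.
by under eq_bigr do rewrite exprS; rewrite -mulr_sumr IHk mulr1.
Qed.

Definition labelled (lab : X -> R) (t : seq X) : seq (X * R) :=
  [seq (x, lab x) | x <- t].

Lemma sampleE_ge0 (mu : dist R X) k (F : seq (X * R) -> \bar R) :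
  (forall x, 0 <= px mu x) -> (forall t, 0 <= F t)%E -> (0 <= sampleE mu k F)%E.
Proof.
move=> px_ge0; elim: k F => [|k IHk] F F_ge0 /=; first exact: F_ge0.
apply: sume_ge0 => x _; apply: mule_ge0; first by rewrite lee_fin.
by apply: integral_ge0 => y _; exact: IHk.
Qed.

Lemma sampleE_label_dist_le (lab : X -> R) k (F : seq (X * R) -> R) :
  (forall t, 0 <= F t) ->
  (sampleE (label_dist lab) k (fun t => (F t)%:E)
     <= (\sum_(t <- seqs_of_size k) w ^+ k * F (labelled lab t))%:E)%E.
Proof.
elim: k F => [|k IHk] F F_ge0 /=; first by rewrite big_seq1 mul1r.
rewrite big_allpairs_dep -sumEFin; apply: lee_sum => x _.
rewrite /= (eq_bigr (fun t => w * (w ^+ k * F (labelled lab (x :: t))))); last first.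
  by move=> t _; rewrite exprS mulrA.
rewrite -mulr_sumr EFinM; apply: lee_wpmul2l; first by rewrite lee_fin invr_ge0.
apply: le_trans (IHk _ (fun t => F_ge0 _)); apply: integral_dirac_le => y.
by apply: sampleE_ge0 => [z|t]; rewrite ?lee_fin ?invr_ge0.
Qed.

End LabelledUniform.

Section FlipOutside.
Variables (R : realFieldType) (X : finType).
Local Notation w := (#|X|%:R^-1 : R).

Definition bool_sign (b : bool) : R := if b then 1 else -1.

Definition flip_outside (t : seq X) (s : {ffun X -> bool}) : {ffun X -> bool} :=
  [ffun x => if x \in t then s x else ~~ s x].

Lemma flip_outsideK t : involutive (flip_outside t).
Proof.
by move=> s; apply/ffunP => x; rewrite !ffunE; case: (x \in t); rewrite ?negbK.
Qed.

Definition regret (s : {ffun X -> bool}) (h : X -> R) : R :=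
  \sum_x w * ((s x)%:R - bool_sign (s x) * h x).

Lemma regret_flip_outside t s h : (0 < #|X|)%N -> (forall x, -1 <= h x <= 1) ->
  1 - 3 * (w * (size t)%:R) <= regret s h + regret (flip_outside t s) h.
Proof.
move=> X_gt0 h1.
have pointwise x : 1 - 3 * (x \in t)%:R <=
    ((s x)%:R - bool_sign (s x) * h x)
    + ((flip_outside t s x)%:R - bool_sign (flip_outside t s x) * h x).
  by rewrite ffunE /bool_sign; have := h1 x; case: (x \in t); case: (s x) => /andP[? ?] /=; lra.
have count_t : \sum_x w * (x \in t)%:R <= w * (size t)%:R.
  rewrite -mulr_sumr ler_wpM2l ?invr_ge0 // -natr_sum ler_nat.
  by apply: leq_trans (card_size t); rewrite -sum1_card [in leqRHS]big_mkcond.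
apply: le_trans (_ : \sum_x w * (1 - 3 * (x \in t)%:R) <= _).
  rewrite (eq_bigr (fun x => w - 3 * (w * (x \in t)%:R))) => [|x _]; last by ring.
  by rewrite sumrB sum_unif // -mulr_sumr; lra.
rewrite /regret -big_split /=; apply: ler_sum => x _.
by rewrite -mulrDr ler_wpM2l ?invr_ge0.
Qed.

End FlipOutside.

Section DCorMLowerBound.
Variables (R : realType) (X : finType).
Local Notation w := (#|X|%:R^-1 : R).
Local Notation lab s := (fun x => bool_sign R (s x)).
Variables (L : learner R X) (eps : R).

Definition succeeds (s : {ffun X -> bool}) (u : seq X) : bool :=
  (ereal_sup [set gcorr (label_dist (lab s)) b | b in @cube01 R X] - eps%:E
     <= corr (label_dist (lab s)) (L (labelled (lab s) u)))%E.

Lemma succeeds_regret s u : succeeds s u -> regret s (L (labelled (lab s) u)) <= eps.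
Proof.
move=> su; have le_sup : (gcorr (label_dist (lab s)) (fun x => Some (s x)%:R)
    <= ereal_sup [set gcorr (label_dist (lab s)) b | b in @cube01 R X])%E.
  apply: ereal_sup_ubound; exists (fun x => Some (s x)%:R) => // x.
  by case: (s x); [right | left].
have := le_trans (leeB le_sup (lexx eps%:E)) su.
rewrite gcorr_label_dist corr_label_dist -EFinB lee_fin /regret.
suff -> : \sum_x w * ((s x)%:R - bool_sign R (s x) * L (labelled (lab s) u) x)
  = \sum_x w * (bool_sign R (s x) * (s x)%:R)
    - \sum_x w * (bool_sign R (s x) * L (labelled (lab s) u) x) by lra.
by rewrite -sumrB; apply: eq_bigr => x _; rewrite /bool_sign; case: (s x) => /=; ring.
Qed.

Lemma labelled_flip_outside (s : {ffun X -> bool}) (u : seq X) :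
  labelled (lab (flip_outside u s)) u = labelled (lab s) u.
Proof. by apply/eq_in_map => x xu; rewrite ffunE xu. Qed.

Hypotheses (X_gt0 : (0 < #|X|)%N) (L_valid : valid_learner L).

Lemma succeeds_flip_outside u s : 3 * (w * (size u)%:R) < 1 - 2 * eps ->
  succeeds s u -> ~~ succeeds (flip_outside u s) u.
Proof.
move=> u_small su; apply/negP => /succeeds_regret.
rewrite labelled_flip_outside => regret_flip.
have := regret_flip_outside u s X_gt0 (L_valid (labelled (lab s) u)).
have := succeeds_regret su; lra.
Qed.

End DCorMLowerBound.

Lemma DCorM_cubepm_cube01_lower_bound (R : realType) (X : finType) (m n : nat)
    (eps delta : R) :
  (0 < m)%N -> #|X| = (2 * m)%N -> eps < 1 / 2 -> delta < 1 / 2 ->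
  DCorM (@unif R X) n (@cubepm R X) (@cube01 R X) eps delta ->
  (1 / 2 - eps) * m%:R <= n%:R.
Proof.
move=> m_gt0 cardX eps_lt delta_lt [L [L_valid L_dcorm]].
rewrite leNgt; apply/negP => n_lt.
have X_gt0 : (0 < #|X|)%N by rewrite cardX muln_gt0 m_gt0.
have u_small u : u \in seqs_of_size X n ->
    3 * (#|X|%:R^-1 * (size u)%:R) < 1 - 2 * eps :> R.
  move/size_seqs_of_size ->; rewrite cardX natrM mulrC.
  suff : n%:R / (2 * m%:R) < (1 / 2 - eps) / 2 :> R by lra.
  rewrite ltr_pdivrMr ?mulr_gt0 ?ltr0n //.
  by rewrite (_ : (1 / 2 - eps) / 2 * (2 * m%:R) = (1 / 2 - eps) * m%:R) //; field.
have success s : 1 - delta <=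
    \sum_(u <- seqs_of_size X n) #|X|%:R^-1 ^+ n * (succeeds L eps s u)%:R.
  have lab_pm x : -1 <= bool_sign R (s x) <= 1.
    by rewrite /bool_sign; case: (s x); apply/andP; split; lra.
  have agree : exists2 s0, @cubepm R X s0 &
      agree_prob (label_dist (fun x => bool_sign R (s x))) s0 = 1%E.
    exists (fun x => Some (bool_sign R (s x))); last exact: agree_prob_label_dist.
    by move=> x; rewrite /bool_sign; case: (s x); [right | left].
  have := L_dcorm _ (label_dist_is_dist X_gt0 lab_pm) (fun=> erefl) agree.
  by move/le_trans/(_ (sampleE_label_dist_le _ _ _)); rewrite lee_fin; apply.
have ffun_gt0 : (0 < #|{ffun X -> bool}|)%N by rewrite card_ffun card_bool expn_gt0.
suff : 1 - delta <= 1 / 2 by lra.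
apply: (average_le_half (p := fun=> #|X|%:R^-1 ^+ n) (Q := succeeds L eps)
          ffun_gt0 _ (sum_seqs_of_size_unif R X_gt0 n) _ success) => [_|u u_n].
  by rewrite exprn_ge0 // invr_ge0.
apply: card_involutive_disjoint (flip_outsideK u) _ => s.
exact: (succeeds_flip_outside X_gt0 L_valid (u_small u u_n)).
Qed.

Theorem lemmaC2 (R : realType) (X : finType) (m : nat) :
  (0 < m)%N -> #|X| = (2 * m)%N ->
  (forall eps delta : R, 0 <= eps -> 0 <= delta ->
     least_samples (fun n => CorM n (@cube01 R X) (@cubepm R X) eps delta) 0)
  /\
  (forall eps delta : R, 0 < eps < 1/2 -> 0 < delta < 1/2 ->
     forall n : nat, DCorM (@unif R X) n (@cubepm R X) (@cube01 R X) eps delta ->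
       (1/2 - eps) * m%:R <= n%:R).
Proof.
move=> m_gt0 cardX; split=> [eps delta eps_ge0 delta_ge0|eps delta].
  by split=> [|k _]; first exact: CorM0_cube01_cubepm.
move=> /andP[_ eps_lt] /andP[_ delta_lt] n.
exact: DCorM_cubepm_cube01_lower_bound.
Qed.
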